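(* Let $\theta_1$ be an irrational number, $\theta_0,\theta_2,\ldots,\theta_n$ real numbers, and $m\ge2$ an integer. Then the array $\big(\lfloor v_1\theta_1+v_2\theta_2+\cdots+v_n\theta_n+\theta_0\rfloor\big)_{\mathbf{v}\in\mathbb{N}^n}$ is uniformly distributed mod $m$.
   Context: An array $(S(\mathbf{v}))_{\mathbf{v}\in\mathbb{N}^n}$ of integers is uniformly distributed mod $m$ if for each $j\in\{0,\ldots,m-1\}$, $\#\{\mathbf{v}:1\le v_i\le V_i\ \forall i,\ S(\mathbf{v})\equiv j\pmod m\}/(V_1\cdots V_n)\to 1/m$ as $V_1,\ldots,V_n\to\infty$. *)

From Stdlib Require Import Reals Lra Lia ZArith List.
Open Scope R_scope.

(* All vectors v = (v_1,...,v_n) with 1 <= v_i <= V i (i = 1..n),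
   represented as lists [v_1; ...; v_n]. *)
Fixpoint box (n : nat) (V : nat -> nat) : list (list nat) :=
  match n with
  | O => nil :: nil
  | S k => flat_map (fun w => map (fun x => w ++ (x :: nil)) (seq 1 (V (S k))))
                    (box k V)
  end.

Definition count_res (S : list nat -> Z) (m : Z) (j : Z) (n : nat) (V : nat -> nat) : nat :=
  length (filter (fun v => Z.eqb (Z.modulo (S v) m) j) (box n V)).

Definition unif_distr_mod (n : nat) (S : list nat -> Z) (m : Z) : Prop :=
  forall j : Z, (0 <= j < m)%Z ->
    forall eps : R, eps > 0 -> exists N : nat,
      forall V : nat -> nat, (forall i, (1 <= i <= n)%nat -> (N <= V i)%nat) ->
        Rabs (INR (count_res S m j n V) / INR (fold_right Nat.mul 1%nat (map V (seq 1 n)))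
              - 1 / IZR m) < eps.

Fixpoint lin_comb (theta : nat -> R) (i : nat) (v : list nat) : R :=
  match v with
  | nil => 0
  | x :: v' => INR x * theta i + lin_comb theta (S i) v'
  end.

Definition floor_array (theta : nat -> R) (v : list nat) : Z :=
  Int_part (lin_comb theta 1 v + theta O).

Definition irrational (x : R) : Prop := forall p q : Z, q <> 0%Z -> x <> IZR p / IZR q.

(* Summing over the last coordinate reduces the count to one-dimensional counts
   #{1 <= x <= L : floor(c + x theta_1) = j mod m}, which only need to be equidistributed
   uniformly in the offset c.  Now floor(y) = j mod m iff frac((y - j)/m) < 1/m, so these
   are visits of the rotation by beta = theta_1/m to a window of length w = 1/m.
   Dirichlet gives q beta = P + e with 0 < |e| small; shifting the index by multiples
   of q moves the offset by multiples of e, so the visit count at any offset dominates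
   the count at any other offset for the window shrunk by |e|, up to O(q/|e|).
   Averaging over the m R offsets j w + r |e|, whose shrunk windows cover the circle at
   least R - 1 times, gives a lower bound (w - eps) L uniform in the offset; since the
   m windows for j = 0, ..., m - 1 partition the circle, it is also an upper bound. *)

From Stdlib Require Import Reals Lra Lia ZArith List Classical.
Open Scope R_scope.

Lemma Int_part_bounds y : IZR (Int_part y) <= y < IZR (Int_part y) + 1.
Proof. destruct (base_Int_part y); lra. Qed.

Lemma Int_part_eq y z : IZR z <= y < IZR z + 1 -> Int_part y = z.
Proof. intros H; symmetry; apply Int_part_spec; lra. Qed.

Lemma Int_part_nonneg y : 0 <= y -> (0 <= Int_part y)%Z.
Proof.
  intros Hy; pose proof (Int_part_bounds y).
  assert (-1 < IZR (Int_part y)) as H1 by lra; apply lt_IZR in H1; lia.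
Qed.

Lemma frac_part_eq y z : IZR z <= y < IZR z + 1 -> frac_part y = y - IZR z.
Proof. intros H; unfold frac_part; rewrite (Int_part_eq y z H); reflexivity. Qed.

Lemma frac_part_bounds y : 0 <= frac_part y < 1.
Proof. destruct (base_fp y); lra. Qed.

Lemma frac_part_add_IZR y k : frac_part (y + IZR k) = frac_part y.
Proof.
  pose proof (Int_part_bounds y).
  rewrite (frac_part_eq _ (Int_part y + k)); rewrite ?plus_IZR; unfold frac_part; lra.
Qed.

Lemma Int_part_mod_iff y (m j : nat) : (j < m)%nat ->
  (Int_part y mod Z.of_nat m = Z.of_nat j)%Z <-> frac_part ((y - INR j) / INR m) < 1 / INR m.
Proof.
  intros Hjm.
  assert (Hm : 1 <= INR m) by (apply (le_INR 1); lia).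
  set (u := (y - INR j) / INR m).
  assert (Hy : y = INR j + INR m * u) by (unfold u; field; lra).
  assert (Hlt : forall f, f < 1 / INR m <-> INR m * f < 1).
  { intros f; unfold Rdiv; rewrite Rmult_1_l; split; intros H.
    - apply (Rmult_lt_compat_l (INR m)) in H; [|lra]; rewrite Rinv_r in H; lra.
    - apply (Rmult_lt_reg_l (INR m)); [lra|]; rewrite Rinv_r; lra. }
  rewrite Hlt; split; intros H.
  - set (K := (Int_part y / Z.of_nat m)%Z).
    assert (EK : Int_part y = (Z.of_nat m * K + Z.of_nat j)%Z)
      by (rewrite <- H; apply Z.div_mod; lia).
    pose proof (Int_part_bounds y) as By; rewrite EK, plus_IZR, mult_IZR, <- !INR_IZR_INZ in By.
    rewrite (frac_part_eq u K); nra.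
  - pose proof (frac_part_bounds u) as Bu; pose proof (Rplus_Int_part_frac_part u) as Eu.
    assert (Ey : Int_part y = (Z.of_nat j + Int_part u * Z.of_nat m)%Z).
    { apply Int_part_eq; rewrite plus_IZR, mult_IZR, <- !INR_IZR_INZ; nra. }
    rewrite Ey, Z_mod_plus_full; apply Z.mod_small; lia.
Qed.

Fixpoint rsum {A} (f : A -> R) (l : list A) : R :=
  match l with nil => 0 | a :: l' => f a + rsum f l' end.

Lemma rsum_app {A} (f : A -> R) l1 l2 : rsum f (l1 ++ l2) = rsum f l1 + rsum f l2.
Proof. induction l1; simpl; [ring | rewrite IHl1; ring]. Qed.

Lemma rsum_ext {A} (f g : A -> R) l : (forall a, In a l -> f a = g a) -> rsum f l = rsum g l.
Proof. induction l; simpl; intros H; [reflexivity | rewrite H, IHl; auto]. Qed.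

Lemma rsum_le {A} (f g : A -> R) l : (forall a, In a l -> f a <= g a) -> rsum f l <= rsum g l.
Proof.
  induction l; simpl; intros H; [lra|].
  pose proof (H a (or_introl eq_refl)); pose proof (IHl (fun x Hx => H x (or_intror Hx))); lra.
Qed.

Lemma rsum_add {A} (f g : A -> R) l : rsum (fun a => f a + g a) l = rsum f l + rsum g l.
Proof. induction l; simpl; [ring | rewrite IHl; ring]. Qed.

Lemma rsum_sub {A} (f g : A -> R) l : rsum (fun a => f a - g a) l = rsum f l - rsum g l.
Proof. induction l; simpl; [ring | rewrite IHl; ring]. Qed.

Lemma rsum_const {A} (c : R) (l : list A) : rsum (fun _ => c) l = INR (length l) * c.
Proof. induction l; simpl rsum; [simpl; ring | rewrite IHl, length_cons, S_INR; ring]. Qed.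

Lemma rsum_swap {A B} (F : A -> B -> R) l1 l2 :
  rsum (fun a => rsum (F a) l2) l1 = rsum (fun b => rsum (fun a => F a b) l1) l2.
Proof.
  induction l1; simpl.
  - induction l2; simpl; [reflexivity | rewrite <- IHl2; ring].
  - rewrite IHl1, <- rsum_add; reflexivity.
Qed.

Lemma rsum_map {A B} (f : B -> R) (h : A -> B) l : rsum f (map h l) = rsum (fun a => f (h a)) l.
Proof. induction l; simpl; [reflexivity | rewrite IHl; reflexivity]. Qed.

Lemma rsum_flat_map {A B} (f : B -> R) (g : A -> list B) l :
  rsum f (flat_map g l) = rsum (fun a => rsum f (g a)) l.
Proof. induction l; simpl; [reflexivity | rewrite rsum_app, IHl; reflexivity]. Qed.

Lemma INR_length_filter {A} (p : A -> bool) l :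
  INR (length (filter p l)) = rsum (fun a => if p a then 1 else 0) l.
Proof. induction l; simpl; [reflexivity | destruct (p a); rewrite ?length_cons, ?S_INR, IHl; ring]. Qed.

Lemma rsum_nonneg {A} (f : A -> R) l : (forall x, In x l -> 0 <= f x) -> 0 <= rsum f l.
Proof.
  intros Hf; apply (rsum_le (fun _ => 0)) in Hf; rewrite rsum_const, Rmult_0_r in Hf; exact Hf.
Qed.

Lemma rsum_term_le {A} (f : A -> R) l a :
  (forall x, In x l -> 0 <= f x) -> In a l -> f a <= rsum f l.
Proof.
  induction l as [|b l IH]; simpl; intros Hf Ha; [contradiction|].
  pose proof (rsum_nonneg f l (fun x Hx => Hf x (or_intror Hx))).
  pose proof (Hf b (or_introl eq_refl)).
  destruct Ha as [<-|Ha]; [lra|].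
  pose proof (IH (fun x Hx => Hf x (or_intror Hx)) Ha); lra.
Qed.

Lemma rsum_upper_of_lower {A} (f : A -> R) l a b :
  (forall x, In x l -> b <= f x) -> In a l -> f a <= rsum f l - (INR (length l) - 1) * b.
Proof.
  intros Hb Ha.
  pose proof (rsum_term_le (fun x => f x - b) l a) as H.
  rewrite rsum_sub, rsum_const in H.
  assert (f a - b <= rsum f l - INR (length l) * b) by (apply H; auto; intros x Hx; specialize (Hb x Hx); lra).
  lra.
Qed.

Lemma rsum_dev {A} (f : A -> R) l b d : (forall a, In a l -> Rabs (f a - b) <= d) ->
  Rabs (rsum f l - INR (length l) * b) <= INR (length l) * d.
Proof.
  induction l; cbn [rsum length]; intros H.
  - simpl INR; rewrite Rmult_0_l, Rminus_0_r, Rabs_R0; lra.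
  - rewrite S_INR. pose proof (H a (or_introl eq_refl)).
    pose proof (IHl (fun x Hx => H x (or_intror Hx))).
    replace (f a + rsum f l - (INR (length l) + 1) * b)
      with ((f a - b) + (rsum f l - INR (length l) * b)) by ring.
    eapply Rle_trans; [apply Rabs_triang | lra].
Qed.

Lemma rsum_seq_add (f : nat -> R) a p L :
  rsum f (seq (a + p) L) = rsum (fun i => f (i + p)%nat) (seq a L).
Proof.
  revert a; induction L; intros a; simpl; [reflexivity|].
  rewrite <- IHL; do 3 f_equal; lia.
Qed.

Lemma rsum_seq_shift_ge (f : nat -> R) a p L : (forall i, 0 <= f i <= 1) ->
  rsum f (seq (a + p) L) >= rsum f (seq a L) - INR p.
Proof.
  intros Hf.
  assert (E : rsum f (seq a (p + L)) = rsum f (seq a (L + p))) by (rewrite Nat.add_comm; reflexivity).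
  rewrite !seq_app, !rsum_app in E.
  assert (rsum f (seq a p) <= INR p).
  { replace (INR p) with (rsum (fun _ => 1) (seq a p)) by (rewrite rsum_const, length_seq; ring).
    apply rsum_le; intros; apply Hf. }
  assert (0 <= rsum f (seq (a + L) p)) by (apply rsum_nonneg; intros; apply Hf).
  lra.
Qed.

Definition ind_lt (x b : R) : R := if Rlt_dec x b then 1 else 0.
Definition ind_Ico (a b x : R) : R := if Rle_dec a x then ind_lt x b else 0.

Lemma ind_lt_bounds x b : 0 <= ind_lt x b <= 1.
Proof. unfold ind_lt; destruct Rlt_dec; lra. Qed.

Lemma ind_Ico_bounds a b x : 0 <= ind_Ico a b x <= 1.
Proof. unfold ind_Ico; destruct Rle_dec; [apply ind_lt_bounds | lra]. Qed.

Lemma ind_Ico_sub a b x : a <= b -> ind_Ico a b x = ind_lt x b - ind_lt x a.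
Proof. intros; unfold ind_Ico, ind_lt; destruct (Rle_dec a x), (Rlt_dec x b), (Rlt_dec x a); lra. Qed.

Lemma rsum_ind_Ico_grid tau x Rn : 0 < tau -> 0 <= x ->
  rsum (fun r => ind_Ico (INR r * tau) (INR (S r) * tau) x) (seq 0 Rn) = ind_lt x (INR Rn * tau).
Proof.
  intros Ht Hx; induction Rn.
  - unfold ind_lt; simpl; destruct Rlt_dec; lra.
  - rewrite seq_S, rsum_app, IHRn, Nat.add_0_l; cbn [rsum]; rewrite Rplus_0_r.
    unfold ind_Ico, ind_lt; rewrite !S_INR.
    repeat destruct Rlt_dec; destruct Rle_dec; nra.
Qed.

Lemma ind_lt_frac_sub y r tau : 0 < tau -> INR (S r) * tau <= 1 ->
  ind_lt (frac_part (y - INR r * tau)) tau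
  = ind_Ico (INR r * tau) (INR (S r) * tau) (frac_part y).
Proof.
  intros Ht Hr; rewrite S_INR in *.
  pose proof (pos_INR r); pose proof (Int_part_bounds y) as By.
  unfold frac_part at 2, ind_Ico, ind_lt.
  destruct (Rle_dec (INR r * tau) (y - IZR (Int_part y))).
  - rewrite (frac_part_eq _ (Int_part y)) by nra.
    destruct (Rlt_dec (y - INR r * tau - IZR (Int_part y)) tau),
      (Rlt_dec (y - IZR (Int_part y)) ((INR r + 1) * tau)); nra.
  - rewrite (frac_part_eq _ (Int_part y - 1)) by (rewrite minus_IZR; simpl; nra).
    rewrite minus_IZR; simpl; destruct Rlt_dec; nra.
Qed.

Lemma rsum_ind_lt_frac_sub y Rn tau : 0 < tau -> INR Rn * tau <= 1 ->
  rsum (fun r => ind_lt (frac_part (y - INR r * tau)) tau) (seq 0 Rn)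
  = ind_lt (frac_part y) (INR Rn * tau).
Proof.
  intros Ht HR; rewrite <- rsum_ind_Ico_grid by (auto; apply frac_part_bounds).
  apply rsum_ext; intros r Hr; apply in_seq in Hr; apply ind_lt_frac_sub; auto.
  apply Rle_trans with (INR Rn * tau); auto.
  apply Rmult_le_compat_r; [lra | apply le_INR; lia].
Qed.

Lemma rsum_ind_lt_frac_partition y m w : 0 < w -> INR m * w = 1 ->
  rsum (fun j => ind_lt (frac_part (y - INR j * w)) w) (seq 0 m) = 1.
Proof.
  intros Hw Hm; rewrite rsum_ind_lt_frac_sub, Hm by lra.
  unfold ind_lt; destruct Rlt_dec; auto; pose proof (frac_part_bounds y); lra.
Qed.

(* The m R windows [j w + (r + 1) sig, (j + 1) w + r sig) cover every point of the circle
   at least R - 1 times. *)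
Lemma rsum_ind_Ico_frac_grid_ge y m w Rn sig :
  0 < sig <= w -> INR m * w = 1 -> INR Rn * sig <= w ->
  rsum (fun j => rsum (fun r => ind_Ico sig w (frac_part (y - INR j * w - INR r * sig)))
                      (seq 0 Rn)) (seq 0 m) >= INR Rn - 1.
Proof.
  intros Hs Hm HR.
  assert (Hw1 : w <= 1) by (destruct m; [simpl in Hm; lra | rewrite S_INR in Hm; pose proof (pos_INR m); nra]).
  rewrite (rsum_ext _ (fun j =>
      rsum (fun r => ind_lt (frac_part (y - INR r * sig - INR j * w)) w) (seq 0 Rn)
    - rsum (fun r => ind_lt (frac_part (y - INR j * w - INR r * sig)) sig) (seq 0 Rn))).
  2:{ intros j _; rewrite <- rsum_sub; apply rsum_ext; intros r _.
      rewrite ind_Ico_sub by lra.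
      replace (y - INR r * sig - INR j * w) with (y - INR j * w - INR r * sig) by ring; reflexivity. }
  rewrite rsum_sub, rsum_swap.
  rewrite (rsum_ext _ (fun _ => 1)) by (intros r _; apply rsum_ind_lt_frac_partition; lra).
  rewrite rsum_const, length_seq.
  rewrite (rsum_ext _ (fun j => ind_lt (frac_part (y - INR j * w)) (INR Rn * sig)))
    by (intros j _; apply rsum_ind_lt_frac_sub; lra).
  enough (rsum (fun j => ind_lt (frac_part (y - INR j * w)) (INR Rn * sig)) (seq 0 m) <= 1) by lra.
  rewrite <- (rsum_ind_lt_frac_partition y m w) by lra.
  apply rsum_le; intros j _; unfold ind_lt; destruct Rlt_dec, Rlt_dec; lra.
Qed.

Lemma pigeonhole K (f : nat -> nat) :
  (forall i, (i <= K)%nat -> (f i < K)%nat) -> exists i j, (i < j <= K)%nat /\ f i = f j.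
Proof.
  intros Hf; apply NNPP; intros Hno.
  assert (Hnd : NoDup (map f (seq 0 (S K)))).
  { apply NoDup_map_NoDup_ForallPairs; [|apply seq_NoDup].
    intros a b Ha Hb Eab; apply in_seq in Ha, Hb.
    destruct (Nat.lt_trichotomy a b) as [Hlt|[Heq|Hlt]]; auto; exfalso; apply Hno;
      [exists a, b | exists b, a]; split; auto; lia. }
  assert (Hincl : incl (map f (seq 0 (S K))) (seq 0 K)).
  { intros y Hy; apply in_map_iff in Hy as [i [<- Hi]]; apply in_seq in Hi; apply in_seq.
    specialize (Hf i); lia. }
  pose proof (NoDup_incl_length Hnd Hincl) as H; rewrite length_map, !length_seq in H; lia.
Qed.

Lemma dirichlet_approx beta K : (1 <= K)%nat ->
  (forall q : nat, (1 <= q)%nat -> forall P : Z, INR q * beta <> IZR P) ->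
  exists (q : nat) (P : Z) (e : R), (1 <= q)%nat /\ 0 < Rabs e < 1 / INR K /\ INR q * beta = IZR P + e.
Proof.
  intros HK Hirr.
  assert (HKr : 1 <= INR K) by (apply (le_INR 1); lia).
  set (bin i := Int_part (INR K * frac_part (INR i * beta))).
  assert (Hbin : forall i, 0 <= IZR (bin i) /\ IZR (bin i) <= INR K * frac_part (INR i * beta) < IZR (bin i) + 1
                           /\ (bin i < Z.of_nat K)%Z).
  { intros i; pose proof (frac_part_bounds (INR i * beta)).
    pose proof (Int_part_bounds (INR K * frac_part (INR i * beta))) as B; fold (bin i) in B.
    assert (0 <= bin i)%Z by (apply Int_part_nonneg; nra).
    repeat split; try lra; [apply IZR_le; lia|].
    apply lt_IZR; rewrite <- INR_IZR_INZ; nra. }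
  destruct (pigeonhole K (fun i => Z.to_nat (bin i))) as [i [j [Hij Eij]]].
  { intros i _; destruct (Hbin i) as [H0 [_ H1]]; apply le_IZR in H0; lia. }
  assert (Ebin : bin i = bin j) by (destruct (Hbin i) as [H0 _], (Hbin j) as [H1 _]; apply le_IZR in H0, H1; lia).
  set (e := frac_part (INR j * beta) - frac_part (INR i * beta)).
  exists (j - i)%nat, (Int_part (INR j * beta) - Int_part (INR i * beta))%Z, e.
  assert (Eq : INR (j - i) * beta = IZR (Int_part (INR j * beta) - Int_part (INR i * beta)) + e)
    by (rewrite minus_INR, minus_IZR by lia; unfold e, frac_part; ring).
  repeat split; auto; [lia | | ].
  - apply Rabs_pos_lt; intros He; apply (Hirr (j - i)%nat ltac:(lia) (Int_part (INR j * beta) - Int_part (INR i * beta))%Z).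
    rewrite Eq, He; ring.
  - destruct (Hbin i) as [_ [Bi _]], (Hbin j) as [_ [Bj _]]; rewrite Ebin in Bi.
    assert (Hke : INR K * Rabs e < 1) by (unfold Rabs; destruct Rcase_abs; unfold e; nra).
    apply (Rmult_lt_reg_l (INR K)); [lra|]; replace (INR K * (1 / INR K)) with 1 by (field; lra); lra.
Qed.

Lemma grid_floor sig x : 0 < sig -> 0 <= x < 1 ->
  exists t : nat, INR t * sig <= x < (INR t + 1) * sig /\ INR t <= 1 / sig.
Proof.
  intros Hs Hx.
  assert (Hq : 0 <= x / sig) by (apply Rmult_le_pos; [lra | left; apply Rinv_0_lt_compat; lra]).
  exists (Z.to_nat (Int_part (x / sig))).
  rewrite INR_IZR_INZ, Z2Nat.id by (apply Int_part_nonneg; lra).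
  pose proof (Int_part_bounds (x / sig)) as B.
  assert (x = x / sig * sig) by (field; lra).
  assert (x / sig <= 1 / sig) by (apply Rmult_le_compat_r; [left; apply Rinv_0_lt_compat|]; lra).
  repeat split; nra.
Qed.

Lemma offset_reachable e g g' : e <> 0 ->
  exists (t : nat) (s : R) (k : Z),
    0 <= s <= Rabs e /\ INR t <= 1 / Rabs e + 1 /\ g + INR t * e = g' + s + IZR k.
Proof.
  intros He; pose proof (Rabs_pos_lt e He) as Hs.
  destruct (Rle_lt_dec 0 e) as [Hpos|Hneg].
  - rewrite Rabs_pos_eq in * by lra.
    destruct (grid_floor e (frac_part (g' - g)) Hs (frac_part_bounds _)) as [t [Bt Ht]].
    exists (S t), ((INR t + 1) * e - frac_part (g' - g)), (- Int_part (g' - g))%Z.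
    rewrite S_INR, opp_IZR; repeat split; try lra.
    unfold frac_part; ring.
  - rewrite Rabs_left in * by lra.
    destruct (grid_floor (- e) (frac_part (g - g')) Hs (frac_part_bounds _)) as [t [Bt Ht]].
    exists t, (frac_part (g - g') - INR t * - e), (Int_part (g - g')).
    repeat split; try lra.
    unfold frac_part; ring.
Qed.

Lemma ind_Ico_frac_add_le y s sig w : 0 <= s <= sig ->
  ind_Ico sig w (frac_part (y + s)) <= ind_lt (frac_part y) w.
Proof.
  intros Hs; unfold ind_Ico, ind_lt.
  destruct (Rle_dec sig (frac_part (y + s))) as [Hge|]; [|destruct Rlt_dec; lra].
  pose proof (frac_part_bounds (y + s)).
  rewrite (frac_part_eq y (Int_part (y + s))) by (unfold frac_part in *; lra).
  destruct Rlt_dec, Rlt_dec; unfold frac_part in *; lra.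
Qed.

Definition hits (beta w g : R) (L : nat) : R :=
  rsum (fun i => ind_lt (frac_part (INR i * beta + g)) w) (seq 1 L).

Definition hits_Ico (beta sig w g : R) (L : nat) : R :=
  rsum (fun i => ind_Ico sig w (frac_part (INR i * beta + g))) (seq 1 L).

Lemma hits_ge_hits_Ico beta w (q : nat) (P : Z) e g g' L :
  e <> 0 -> INR q * beta = IZR P + e ->
  hits beta w g' L >= hits_Ico beta (Rabs e) w g L - INR q * (1 / Rabs e + 1).
Proof.
  intros He Hq.
  destruct (offset_reachable e g g' He) as [t [s [k [Hs [Ht Hk]]]]].
  pose proof (rsum_seq_shift_ge (fun i => ind_Ico (Rabs e) w (frac_part (INR i * beta + g)))
                1 (t * q) L (fun i => ind_Ico_bounds _ _ _)) as Hshift.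
  rewrite rsum_seq_add in Hshift.
  assert (Hle : rsum (fun i => ind_Ico (Rabs e) w (frac_part (INR (i + t * q) * beta + g))) (seq 1 L)
                <= hits beta w g' L).
  { apply rsum_le; intros i _.
    replace (INR (i + t * q) * beta + g) with (INR i * beta + g' + s + IZR (k + Z.of_nat t * P)).
    - rewrite frac_part_add_IZR; apply ind_Ico_frac_add_le; auto.
    - rewrite plus_IZR, mult_IZR, <- INR_IZR_INZ, plus_INR, mult_INR.
      assert (INR t * INR q * beta = INR t * IZR P + INR t * e) by (rewrite Rmult_assoc, Hq; ring).
      lra. }
  assert (INR (t * q) <= INR q * (1 / Rabs e + 1))
    by (rewrite mult_INR, Rmult_comm; apply Rmult_le_compat_l; [apply pos_INR | auto]).
  unfold hits_Ico; lra.
Qed.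

Lemma rsum_hits_Ico_grid_ge beta m w Rn sig g0 L :
  0 < sig <= w -> INR m * w = 1 -> INR Rn * sig <= w ->
  rsum (fun j => rsum (fun r => hits_Ico beta sig w (g0 - INR j * w - INR r * sig) L)
                      (seq 0 Rn)) (seq 0 m) >= (INR Rn - 1) * INR L.
Proof.
  intros Hs Hm HR; unfold hits_Ico.
  rewrite (rsum_ext _ (fun j => rsum (fun i => rsum (fun r =>
      ind_Ico sig w (frac_part (INR i * beta + (g0 - INR j * w - INR r * sig)))) (seq 0 Rn)) (seq 1 L)))
    by (intros; apply rsum_swap).
  rewrite rsum_swap.
  replace ((INR Rn - 1) * INR L) with (rsum (fun _ => INR Rn - 1) (seq 1 L))
    by (rewrite rsum_const, length_seq; ring).
  apply Rle_ge, rsum_le; intros i _; apply Rge_le.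
  rewrite (rsum_ext _ (fun j => rsum (fun r =>
      ind_Ico sig w (frac_part (INR i * beta + g0 - INR j * w - INR r * sig))) (seq 0 Rn))).
  - apply rsum_ind_Ico_frac_grid_ge; auto.
  - intros j _; apply rsum_ext; intros r _.
    replace (INR i * beta + g0 - INR j * w - INR r * sig)
      with (INR i * beta + (g0 - INR j * w - INR r * sig)) by ring; reflexivity.
Qed.

Lemma hits_ge_grid_average beta m w Rn (q : nat) (P : Z) e g L :
  e <> 0 -> INR q * beta = IZR P + e -> INR m * w = 1 -> Rabs e <= w -> INR Rn * Rabs e <= w ->
  (1 <= Rn)%nat ->
  hits beta w g L >= w * INR L - w * INR L / INR Rn - INR q * (1 / Rabs e + 1).
Proof.
  intros He Hq Hm Hew HR HRn.
  set (C := INR q * (1 / Rabs e + 1)).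
  pose proof (Rabs_pos_lt e He) as Hs.
  assert (HRr : 1 <= INR Rn) by (apply (le_INR 1); lia).
  pose proof (rsum_hits_Ico_grid_ge beta m w Rn (Rabs e) 0 L ltac:(lra) Hm HR) as Hgrid.
  assert (Hup : rsum (fun j => rsum (fun r => hits_Ico beta (Rabs e) w (0 - INR j * w - INR r * Rabs e) L)
                        (seq 0 Rn)) (seq 0 m) <= INR m * (INR Rn * (hits beta w g L + C))).
  { replace (INR m * (INR Rn * (hits beta w g L + C)))
      with (rsum (fun _ => rsum (fun _ => hits beta w g L + C) (seq 0 Rn)) (seq 0 m))
      by (rewrite !rsum_const, !length_seq; ring).
    apply rsum_le; intros j _; apply rsum_le; intros r _.
    pose proof (hits_ge_hits_Ico beta w q P e (0 - INR j * w - INR r * Rabs e) g L He Hq); unfold C; lra. }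
  assert (Hw : 0 < w) by lra.
  assert (Hscale : w / INR Rn * (INR m * (INR Rn * (hits beta w g L + C))) = hits beta w g L + C)
    by (replace (w / INR Rn * (INR m * (INR Rn * (hits beta w g L + C))))
          with ((INR m * w) * (hits beta w g L + C)) by (field; lra); rewrite Hm; ring).
  assert (Hfin : w / INR Rn * ((INR Rn - 1) * INR L) = w * INR L - w * INR L / INR Rn) by (field; lra).
  assert (0 <= w / INR Rn) by (apply Rmult_le_pos; [lra | left; apply Rinv_0_lt_compat; lra]).
  assert (w / INR Rn * ((INR Rn - 1) * INR L) <= w / INR Rn * (INR m * (INR Rn * (hits beta w g L + C))))
    by (apply Rmult_le_compat_l; lra).
  lra.
Qed.

Lemma hits_lower_bound beta m w : INR m * w = 1 ->
  (forall q : nat, (1 <= q)%nat -> forall P : Z, INR q * beta <> IZR P) ->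
  forall eps, eps > 0 -> exists N, forall g L, (N <= L)%nat -> hits beta w g L >= (w - eps) * INR L.
Proof.
  intros Hm Hirr eps Heps.
  assert (Hm1 : (1 <= m)%nat) by (destruct m; [simpl in Hm; lra | lia]).
  assert (Hmr : 1 <= INR m) by (apply (le_INR 1); lia).
  assert (Hw : 0 < w) by nra.
  destruct (INR_archimed eps (2 * w) Heps) as [Rn HRn].
  assert (HRn1 : (1 <= Rn)%nat) by (destruct Rn; [simpl in HRn; lra | lia]).
  assert (HRr : 1 <= INR Rn) by (apply (le_INR 1); lia).
  destruct (dirichlet_approx beta (m * Rn) ltac:(lia) Hirr) as [q [P [e [Hq1 [He Hq]]]]].
  rewrite mult_INR in He.
  assert (HR : INR Rn * Rabs e <= w).
  { assert (INR m * (INR Rn * Rabs e) < 1).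
    { replace 1 with (INR m * INR Rn * (1 / (INR m * INR Rn))) by (field; lra).
      rewrite <- Rmult_assoc; apply Rmult_lt_compat_l; [nra | lra]. }
    nra. }
  set (C := INR q * (1 / Rabs e + 1)).
  destruct (INR_archimed eps (2 * C) Heps) as [N HN].
  exists N; intros g L HL.
  assert (HLr : INR N <= INR L) by (apply le_INR; auto).
  assert (He0 : e <> 0) by (intros E; rewrite E, Rabs_R0 in He; lra).
  pose proof (hits_ge_grid_average beta m w Rn q P e g L He0 Hq Hm ltac:(nra) HR HRn1) as Hav.
  fold C in Hav.
  assert (w * INR L / INR Rn <= eps / 2 * INR L).
  { pose proof (pos_INR L).
    replace (w * INR L / INR Rn) with (2 * w / INR Rn * INR L / 2) by (field; lra).
    assert (2 * w / INR Rn <= eps) by (apply (Rmult_le_reg_r (INR Rn)); [lra|]; field_simplify; lra).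
    nra. }
  assert (C <= eps / 2 * INR L) by nra.
  lra.
Qed.

Definition ind_res (m j : Z) (y : R) : R := if Z.eqb (Int_part y mod m) j then 1 else 0.

Lemma ind_res_eq_ind_lt (m j : nat) y : (j < m)%nat ->
  ind_res (Z.of_nat m) (Z.of_nat j) y = ind_lt (frac_part ((y - INR j) / INR m)) (1 / INR m).
Proof.
  intros Hj; unfold ind_res, ind_lt.
  destruct (Z.eqb_spec (Int_part y mod Z.of_nat m) (Z.of_nat j)) as [E|E], Rlt_dec as [H|H]; auto;
    exfalso; [apply H | apply E]; apply Int_part_mod_iff; auto.
Qed.

Lemma hits_partition beta m w g0 L : 0 < w -> INR m * w = 1 ->
  rsum (fun j => hits beta w (g0 - INR j * w) L) (seq 0 m) = INR L.
Proof.
  intros Hw Hm; unfold hits; rewrite rsum_swap.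
  rewrite (rsum_ext _ (fun _ => 1)), rsum_const, length_seq; [ring|].
  intros i _; rewrite <- (rsum_ind_lt_frac_partition (INR i * beta + g0) m w) by auto.
  apply rsum_ext; intros j _.
  replace (INR i * beta + (g0 - INR j * w)) with (INR i * beta + g0 - INR j * w) by ring; reflexivity.
Qed.

Theorem floor_orbit_equidistributed_mod theta m : (1 <= m)%nat -> irrational theta ->
  forall eps, eps > 0 -> exists N, forall c L j, (N <= L)%nat -> (j < m)%nat ->
    Rabs (rsum (fun x => ind_res (Z.of_nat m) (Z.of_nat j) (c + INR x * theta)) (seq 1 L)
          - INR L / INR m) <= eps * INR L.
Proof.
  intros Hm1 Hirr eps Heps.
  assert (Hmr : 1 <= INR m) by (apply (le_INR 1); lia).
  set (w := 1 / INR m); set (beta := theta / INR m).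
  assert (Hw : INR m * w = 1) by (unfold w; field; lra).
  assert (Hw0 : 0 < w) by (unfold w; apply Rdiv_lt_0_compat; lra).
  assert (Hirr' : forall q : nat, (1 <= q)%nat -> forall P : Z, INR q * beta <> IZR P).
  { intros q Hq P E; apply (Hirr (P * Z.of_nat m)%Z (Z.of_nat q) ltac:(lia)).
    rewrite mult_IZR, <- !INR_IZR_INZ, <- E; unfold beta.
    assert (1 <= INR q) by (apply (le_INR 1); auto).
    field; lra. }
  destruct (hits_lower_bound beta m w Hw Hirr' (eps / INR m)) as [N HN].
  { apply Rdiv_lt_0_compat; lra. }
  exists N; intros c L j HL Hj.
  set (g0 := c / INR m).
  assert (Hcount : forall k, (k < m)%nat ->
    rsum (fun x => ind_res (Z.of_nat m) (Z.of_nat k) (c + INR x * theta)) (seq 1 L)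
    = hits beta w (g0 - INR k * w) L).
  { intros k Hk; apply rsum_ext; intros x _; rewrite ind_res_eq_ind_lt by auto.
    replace ((c + INR x * theta - INR k) / INR m) with (INR x * beta + (g0 - INR k * w))
      by (unfold beta, g0, w; field; lra); reflexivity. }
  rewrite Hcount by auto.
  pose proof (rsum_upper_of_lower (fun k => hits beta w (g0 - INR k * w) L) (seq 0 m) j
                ((w - eps / INR m) * INR L) (fun k _ => Rge_le _ _ (HN _ L HL))
                ltac:(apply in_seq; lia)) as Hup.
  rewrite hits_partition, length_seq in Hup by auto.
  pose proof (HN (g0 - INR j * w) L HL) as Hlow.
  pose proof (pos_INR L).
  assert (INR L / INR m = w * INR L) by (unfold w; field; lra).
  assert (INR m * (eps / INR m) = eps) by (field; lra).
  assert (0 <= eps / INR m * INR L <= eps * INR L).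
  { split; [apply Rmult_le_pos; [apply Rlt_le, Rdiv_lt_0_compat |]; lra|].
    apply Rmult_le_compat_r; auto. unfold Rdiv; rewrite <- (Rmult_1_r eps) at 2.
    apply Rmult_le_compat_l; [lra|]. rewrite <- Rinv_1; apply Rinv_le_contravar; lra. }
  apply Rabs_le; split; nra.
Qed.

Lemma lin_comb_snoc theta i v x :
  lin_comb theta i (v ++ x :: nil) = lin_comb theta i v + INR x * theta (i + length v)%nat.
Proof.
  revert i; induction v as [|a v IH]; intros i; simpl.
  - rewrite Nat.add_0_r; ring.
  - rewrite IH; replace (S i + length v)%nat with (i + S (length v))%nat by lia; ring.
Qed.

Lemma length_box n V v : In v (box n V) -> length v = n.
Proof.
  revert v; induction n; simpl; intros v H.
  - destruct H as [<-|[]]; reflexivity.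
  - apply in_flat_map in H as [u [Hu H]]; apply in_map_iff in H as [x [<- _]].
    rewrite length_app, (IHn u Hu); simpl; lia.
Qed.

Definition box_count (theta : nat -> R) (m j : Z) (n : nat) (V : nat -> nat) (c : R) : R :=
  INR (length (filter (fun v => Z.eqb (Int_part (lin_comb theta 1 v + c) mod m) j) (box n V))).

Lemma box_count_0 theta m j V c : box_count theta m j 0 V c = ind_res m j c.
Proof. unfold box_count, ind_res; simpl; rewrite Rplus_0_l; destruct Z.eqb; reflexivity. Qed.

Lemma box_count_S theta m j k V c :
  box_count theta m j (S k) V c
  = rsum (fun x => box_count theta m j k V (c + INR x * theta (S k))) (seq 1 (V (S k))).
Proof.
  unfold box_count; rewrite INR_length_filter; simpl box; rewrite rsum_flat_map.
  rewrite (rsum_ext _ (fun v => rsum (fun x =>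
      if Z.eqb (Int_part (lin_comb theta 1 v + (c + INR x * theta (S k))) mod m) j then 1 else 0)
      (seq 1 (V (S k)))) (box k V)).
  - rewrite rsum_swap; apply rsum_ext; intros x _; rewrite INR_length_filter; reflexivity.
  - intros v Hv; rewrite rsum_map; apply rsum_ext; intros x _.
    rewrite lin_comb_snoc, (length_box k V v Hv).
    replace (lin_comb theta 1 v + INR x * theta (1 + k)%nat + c)
      with (lin_comb theta 1 v + (c + INR x * theta (S k))) by (simpl; ring).
    reflexivity.
Qed.

Definition box_size (n : nat) (V : nat -> nat) : nat := fold_right Nat.mul 1%nat (map V (seq 1 n)).

Lemma fold_right_mul_init c l : fold_right Nat.mul c l = (fold_right Nat.mul 1%nat l * c)%nat.
Proof. induction l; simpl; [lia | rewrite IHl; lia]. Qed.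

Lemma box_size_S n V : box_size (S n) V = (box_size n V * V (S n))%nat.
Proof.
  unfold box_size; rewrite seq_S, map_app, fold_right_app; simpl.
  rewrite fold_right_mul_init; lia.
Qed.

Lemma box_size_pos n V : (forall i, (1 <= i <= n)%nat -> (1 <= V i)%nat) -> (1 <= box_size n V)%nat.
Proof.
  induction n; intros H; [unfold box_size; simpl; lia|].
  rewrite box_size_S; pose proof (IHn (fun i Hi => H i ltac:(lia))); pose proof (H (S n) ltac:(lia)); nia.
Qed.

Theorem box_count_equidistributed theta m n : (1 <= m)%nat -> (1 <= n)%nat -> irrational (theta 1%nat) ->
  forall eps, eps > 0 -> exists N, forall c V j,
    (forall i, (1 <= i <= n)%nat -> (N <= V i)%nat) -> (j < m)%nat ->
    Rabs (box_count theta (Z.of_nat m) (Z.of_nat j) n V c - INR (box_size n V) / INR m)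
    <= eps * INR (box_size n V).
Proof.
  intros Hm Hn Hirr eps Heps.
  assert (Hmr : 1 <= INR m) by (apply (le_INR 1); auto).
  induction n as [|k IH]; [lia|].
  destruct k as [|k].
  - destruct (floor_orbit_equidistributed_mod (theta 1%nat) m Hm Hirr eps Heps) as [N HN].
    exists N; intros c V j HV Hj.
    rewrite box_count_S, box_size_S; unfold box_size; simpl; rewrite Nat.add_0_r.
    rewrite (rsum_ext _ (fun x => ind_res (Z.of_nat m) (Z.of_nat j) (c + INR x * theta 1%nat)))
      by (intros x _; apply box_count_0).
    apply HN; auto.
  - destruct (IH ltac:(lia)) as [N HN].
    exists N; intros c V j HV Hj.
    rewrite box_count_S, box_size_S, mult_INR.
    set (P := INR (box_size (S k) V)); set (L := V (S (S k))).
    pose proof (rsum_dev (fun x => box_count theta (Z.of_nat m) (Z.of_nat j) (S k) V (c + INR x * theta (S (S k))))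
                 (seq 1 L) (P / INR m) (eps * P)) as H.
    rewrite length_seq in H.
    replace (P * INR L / INR m) with (INR L * (P / INR m)) by (field; lra).
    replace (eps * (P * INR L)) with (INR L * (eps * P)) by ring.
    apply H; intros x _; apply HN; auto; intros i Hi; apply HV; lia.
Qed.

Lemma Rabs_div_sub_le a b d delta : 0 < b -> d <> 0 ->
  Rabs (a - b / d) <= delta * b -> Rabs (a / b - 1 / d) <= delta.
Proof.
  intros Hb Hd H.
  replace (a / b - 1 / d) with ((a - b / d) / b) by (field; lra).
  unfold Rdiv at 1; rewrite Rabs_mult, Rabs_inv, (Rabs_pos_eq b) by lra.
  apply (Rmult_le_reg_r b); [lra|]; rewrite Rmult_assoc, Rinv_l, Rmult_1_r by lra; lra.
Qed.

Theorem proposition6p4 (n : nat) (theta : nat -> R) (m : Z) :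
  (1 <= n)%nat -> irrational (theta 1%nat) -> (2 <= m)%Z ->
  unif_distr_mod n (floor_array theta) m.
Proof.
  intros Hn Hirr Hm j Hj eps Heps.
  destruct (box_count_equidistributed theta (Z.to_nat m) n ltac:(lia) Hn Hirr (eps / 2) ltac:(lra))
    as [N HN].
  exists (Nat.max N 1); intros V HV.
  assert (Hsize : 1 <= INR (box_size n V)).
  { apply (le_INR 1), box_size_pos; intros i Hi; specialize (HV i Hi); lia. }
  specialize (HN (theta 0%nat) V (Z.to_nat j) ltac:(intros i Hi; specialize (HV i Hi); lia) ltac:(lia)).
  rewrite !Z2Nat.id in HN by lia.
  change (INR (count_res (floor_array theta) m j n V)) with (box_count theta m j n V (theta 0%nat)).
  change (fold_right Nat.mul 1%nat (map V (seq 1 n))) with (box_size n V).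
  replace (IZR m) with (INR (Z.to_nat m)) by (rewrite INR_IZR_INZ, Z2Nat.id by lia; reflexivity).
  apply Rle_lt_trans with (eps / 2); [|lra].
  apply Rabs_div_sub_le; [lra | apply not_0_INR; lia | exact HN].
Qed.
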